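(* Let $G$ be an $l$-group with left Haar measure $dg$, $V$ a smooth $G$-module and $n\ge1$. Define $T_n:C_c^\infty(G^{n+1},V)\to C_c^\infty(G^n,V)$ by $$(T_nf)(g_1,\dots,g_n)=\int_Gg^{-1}f(g,gg_1,gg_1g_2,\dots,gg_1\cdots g_n)\,dg.$$ Then $T_n$ is surjective and its kernel is spanned by the elements $g.f-f$, $g\in G$, $f\in C_c^\infty(G^{n+1},V)$, where $(g.f)(g_0,\dots,g_n)=g\,f(g^{-1}g_0,\dots,g^{-1}g_n)$.
   Context: An $l$-group: locally compact group, countable at infinity, with a basis of neighbourhoods of $e$ of compact open subgroups. Smooth module: every vector fixed by a compact open subgroup. $C_c^\infty(Y,V)$: locally constant compactly supported functions $Y\to V$. *)

From HB Require Import structures.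
From mathcomp Require Import all_boot all_order all_algebra.
From mathcomp Require Import all_classical all_reals all_analysis.
From mathcomp.real_closed Require Import complex.
Import Order.TTheory GRing.Theory Num.Theory.

Set Implicit Arguments.
Unset Strict Implicit.
Unset Printing Implicit Defensive.

Local Open Scope classical_set_scope.
Local Open Scope ring_scope.

Definition compact_open_subgroup (G : ptopologicalType)
  (mul : G -> G -> G) (inv : G -> G) (one : G) (K : set G) : Prop :=
  [/\ open K, compact K, K one & forall x y, K x -> K y -> K (mul x (inv y))].

Definition is_lgroup (G : ptopologicalType)
  (mul : G -> G -> G) (inv : G -> G) (one : G) : Prop :=
  [/\
      (forall x y z, mul x (mul y z) = mul (mul x y) z)
      /\ (forall x, mul one x = x) /\ (forall x, mul x one = x)
      /\ (forall x, mul (inv x) x = one) /\ (forall x, mul x (inv x) = one),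
      continuous (fun p : G * G => mul p.1 p.2) /\ continuous inv,
      hausdorff_space G /\ (forall x : G, exists C, compact C /\ nbhs x C),
      (exists C : nat -> set G, (forall k, compact (C k)) /\ \bigcup_k C k = setT)
    &
      (forall U, nbhs one U ->
         exists K, compact_open_subgroup mul inv one K /\ K `<=` U)].

Notation borel G := (g_sigma_algebraType (@open G)).

Definition is_left_haar (R : realType) (G : ptopologicalType)
  (mul : G -> G -> G) (mu : {measure set (borel G) -> \bar R}) : Prop :=
  [/\ (forall (g : G) (A : set (borel G)), measurable A ->
         mu [set mul g x | x in A] = mu A),
      (forall A : set G, compact A -> (mu A < +oo)%E),
      (forall U : set G, open U -> U !=set0 -> (0 < mu U)%E),
      (forall A : set (borel G), measurable A ->
         mu A = ereal_inf [set mu U | U in [set U : set G | open U /\ A `<=` U]])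
    & (forall U : set G, open U ->
         mu U = ereal_sup [set mu C | C in [set C : set G | compact C /\ C `<=` U]])].

Definition is_smooth_module (R : realType) (G : ptopologicalType)
  (mul : G -> G -> G) (inv : G -> G) (one : G)
  (V : lmodType R[i]) (act : G -> V -> V) : Prop :=
  [/\ (forall g (a : R[i]) (u v : V), act g (a *: u + v) = a *: act g u + act g v),
      (forall v, act one v = v),
      (forall g h v, act (mul g h) v = act g (act h v))
    & (forall v, exists K, compact_open_subgroup mul inv one K /\
                           forall k, K k -> act k v = v)].

Definition Cc_infty (Y : topologicalType) (V : zmodType) (f : Y -> V) : Prop :=
  (forall y, \forall z \near y, f z = f y) /\
  compact (closure [set y | f y != 0]).

Definition is_lc_integral (R : realType) (G : ptopologicalType)
  (mu : {measure set (borel G) -> \bar R}) (V : lmodType R[i])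
  (h : G -> V) (v : V) : Prop :=
  exists k (U : 'I_k -> set G) (c : 'I_k -> V),
    [/\ (forall j, compact (U j) /\ open (U j)),
        (forall j j', j != j' -> U j `&` U j' = set0),
        (forall j x, U j x -> h x = c j),
        (forall x, h x != 0 -> exists j, U j x)
      & v = \sum_(j < k) ((fine (mu (U j)))%:C)%C *: c j].

Definition lc_integral (R : realType) (G : ptopologicalType)
  (mu : {measure set (borel G) -> \bar R}) (V : lmodType R[i])
  (h : G -> V) : V :=
  xget 0 (is_lc_integral mu h).

(* the point (g, g g_1, g g_1 g_2, ..., g g_1 ... g_n) of G^{n+1} *)
Definition chain_point (G : Type) (mul : G -> G -> G) (n : nat)
  (g : G) (gs : 'I_n -> G) : 'I_n.+1 -> G :=
  fun i => foldl mul g (take i (map gs (enum 'I_n))).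

Definition Tn (R : realType) (G : ptopologicalType)
  (mul : G -> G -> G) (inv : G -> G)
  (mu : {measure set (borel G) -> \bar R}) (V : lmodType R[i])
  (act : G -> V -> V) (n : nat) (f : {ptws 'I_n.+1 -> G} -> V) : {ptws 'I_n -> G} -> V :=
  fun gs => lc_integral mu (fun g => act (inv g) (f (chain_point mul g gs))).

Definition fun_act (G : Type) (mul : G -> G -> G) (inv : G -> G)
  (V : Type) (act : G -> V -> V) (m : nat) (g : G) (f : ('I_m -> G) -> V) :
  ('I_m -> G) -> V :=
  fun x => act g (f (fun i => mul (inv g) (x i))).

(* Write Phi_f(g; gs) := g^-1 f(g, g g_1, ..., g g_1...g_n), so that T_n f is the
   integral of Phi_f in its first variable.  The chain map (g, gs) |-> (g, g g_1, ...)
   is a homeomorphism G x G^n -> G^(n+1), with inverse y |-> (y_0, Delta y) where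
   Delta y = (y_i^-1 y_(i+1))_i, so Phi_f is locally constant with compact support.
   By compactness one compact open subgroup K makes every slice Phi_f(.; gs) right
   K-invariant, with support in one compact set C, and all the integrals become
   finite sums over a partition of C into left cosets x_j K.  This gives the
   smoothness of T_n f, and T_n (a.f - f) = 0 by left invariance of dg.  A preimage
   of h is y |-> [y_0 in K] mu(K)^-1 y_0 h(Delta y).  If T_n f = 0, let f_j be
   y |-> [y_0 in K] y_0 Phi_f(x_j; Delta y): then x_j.f_j agrees with f on
   {y_0 in x_j K}, while sum_j f_j = 0 because sum_j Phi_f(x_j; .) = T_n f / mu(K) = 0;
   hence f = sum_j (x_j.f_j - f_j). *)

From HB Require Import structures.
From mathcomp Require Import all_boot all_order all_algebra.
From mathcomp Require Import all_classical all_reals all_analysis.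
From mathcomp.real_closed Require Import complex.
From mathcomp Require Import zify.
From mathcomp Require finmap.
Import Order.TTheory GRing.Theory Num.Theory.

Set Implicit Arguments.
Unset Strict Implicit.
Unset Printing Implicit Defensive.

Local Open Scope classical_set_scope.
Local Open Scope ring_scope.

Lemma in_bigsetU_ord {T : Type} k (F : 'I_k -> set T) x :
  (\big[setU/set0]_(i < k) F i) x <-> exists i, F i x.
Proof.
rewrite -big_enum -bigcup_seq.
by split=> [[i _ Fi]|[i Fi]]; exists i => //=; rewrite mem_enum.
Qed.

Lemma continuous_ptws {I : eqType} {X T : topologicalType} (h : X -> {ptws I -> T}) :
  (forall i, continuous (fun x => h x i)) -> continuous h.
Proof.
move=> hc x; apply/cvg_sup => i A [B [[U oU <-] Bhx BA]].
by apply: (filterS BA); apply: (hc i); apply: open_nbhs_nbhs.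
Qed.

Lemma continuous_pair (X Y Z : topologicalType) (a : X -> Y) (b : X -> Z) :
  continuous a -> continuous b -> continuous (fun x => (a x, b x)).
Proof. by move=> ca cb x; apply: cvg_pair; [exact: ca|exact: cb]. Qed.

Lemma ptws_proj_continuous {I : eqType} {T : topologicalType} (i : I) :
  continuous (fun y : {ptws I -> T} => y i).
Proof. exact: (@proj_continuous I (fun _ => T) i). Qed.

Lemma compact_closure_subset (Y : topologicalType) (A E : set Y) :
  hausdorff_space Y -> compact E -> A `<=` E -> compact (closure A).
Proof.
move=> hY cE AE; apply: (subclosed_compact (B := E)) => //; first exact: closed_closure.
by move=> t /(closureS AE); rewrite -(closure_id E).1 //; exact: compact_closed.
Qed.

Definition locally_constant (Y : topologicalType) (W : Type) (f : Y -> W) :=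
  forall y, \forall z \near y, f z = f y.

Lemma locally_constant_comp (Y Z : topologicalType) (W : Type) (f : Z -> W) (phi : Y -> Z) :
  locally_constant f -> continuous phi -> locally_constant (f \o phi).
Proof. by move=> lf cphi y; exact: (cphi y _ (lf (phi y))). Qed.

Lemma locally_constant_cst (Y : topologicalType) (W : Type) (w : W) :
  locally_constant (fun _ : Y => w).
Proof. by move=> y; apply: nearW. Qed.

Section LGroup.
Variables (G : ptopologicalType) (mul : G -> G -> G) (inv : G -> G) (one : G).
Hypothesis HG : is_lgroup mul inv one.

Lemma mulgA x y z : mul x (mul y z) = mul (mul x y) z.
Proof. by case: HG => -[]. Qed.
Lemma mul1g x : mul one x = x.
Proof. by case: HG => -[_ []]. Qed.
Lemma mulg1 x : mul x one = x.
Proof. by case: HG => -[_ [_ []]]. Qed.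
Lemma mulVg x : mul (inv x) x = one.
Proof. by case: HG => -[_ [_ [_ []]]]. Qed.
Lemma mulgV x : mul x (inv x) = one.
Proof. by case: HG => -[_ [_ [_ []]]]. Qed.
Lemma mulKg x y : mul (inv x) (mul x y) = y.
Proof. by rewrite mulgA mulVg mul1g. Qed.
Lemma mulKVg x y : mul x (mul (inv x) y) = y.
Proof. by rewrite mulgA mulgV mul1g. Qed.
Lemma mulgK x y : mul (mul y x) (inv x) = y.
Proof. by rewrite -mulgA mulgV mulg1. Qed.
Lemma mulgI x : injective (mul x).
Proof. by move=> y z e; rewrite -(mulKg x y) e mulKg. Qed.
Lemma invgK : involutive inv.
Proof. by move=> x; apply: (@mulgI (inv x)); rewrite mulVg mulgV. Qed.
Lemma invMg x y : inv (mul x y) = mul (inv y) (inv x).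
Proof. by apply: (@mulgI (mul x y)); rewrite mulgV -mulgA mulKVg mulgV. Qed.

Lemma lgroup_hausdorff : hausdorff_space G.
Proof. by case: HG => _ _ []. Qed.

Lemma compact_open_subgroup_basis U : nbhs one U ->
  exists K, compact_open_subgroup mul inv one K /\ K `<=` U.
Proof. by case: HG => _ _ _ _; apply. Qed.

Lemma continuous_mul (X : topologicalType) (f g : X -> G) :
  continuous f -> continuous g -> continuous (fun x => mul (f x) (g x)).
Proof.
case: HG => _ [cmul _] _ _ _ cf cg x.
by apply: continuous2_cvg; [exact: (cmul (f x, g x))|exact: cf|exact: cg].
Qed.

Lemma continuous_inv (X : topologicalType) (f : X -> G) :
  continuous f -> continuous (fun x => inv (f x)).
Proof. by case: HG => _ [_ cinv] _ _ _ cf x; apply: continuous_comp; [exact: cf|exact: cinv]. Qed.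

Lemma lmul_continuous a : continuous (mul a).
Proof.
have cst : continuous (fun _ : G => a) by move=> x; exact: cvg_cst.
exact: (continuous_mul cst (fun x => cvg_id)).
Qed.

Lemma lmul_compact a (C : set G) : compact C -> compact (mul a @` C).
Proof. by apply: continuous_compact; exact/continuous_subspaceT/lmul_continuous. Qed.

Section CompactOpenSubgroup.
Variable K : set G.
Hypothesis HK : compact_open_subgroup mul inv one K.

Lemma subgroup1 : K one. Proof. by case: HK. Qed.
Lemma subgroup_open : open K. Proof. by case: HK. Qed.
Lemma subgroup_compact : compact K. Proof. by case: HK. Qed.
Lemma subgroup_closed : closed K.
Proof. exact: (compact_closed lgroup_hausdorff subgroup_compact). Qed.
Lemma subgroup_nbhs : nbhs one K.
Proof. by apply: open_nbhs_nbhs; split; [exact: subgroup_open|exact: subgroup1]. Qed.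

Lemma subgroupMV x y : K x -> K y -> K (mul x (inv y)).
Proof. by case: HK => _ _ _; apply. Qed.
Lemma subgroupV x : K x -> K (inv x).
Proof. by move=> Kx; rewrite -[inv x]mul1g; apply: subgroupMV => //; exact: subgroup1. Qed.
Lemma subgroupM x y : K x -> K y -> K (mul x y).
Proof. by move=> Kx Ky; rewrite -[y]invgK; apply: subgroupMV => //; exact: subgroupV. Qed.

Definition lcoset x := [set g | K (mul (inv x) g)].

Lemma lcoset_refl x : lcoset x x.
Proof. by rewrite /lcoset /= mulVg; exact: subgroup1. Qed.

Lemma lcoset_open x : open (lcoset x).
Proof.
by apply: (@open_comp _ _ (mul (inv x)) K) => [g _|]; [exact: lmul_continuous|exact: subgroup_open].
Qed.

Lemma lcosetE x : lcoset x = mul x @` K.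
Proof.
apply/seteqP; split => g /=; last by case=> k Kk <-; rewrite /lcoset /= mulKg.
by move=> Kg; exists (mul (inv x) g) => //; rewrite mulKVg.
Qed.

Lemma lcoset_compact x : compact (lcoset x).
Proof. by rewrite lcosetE; apply: lmul_compact; exact: subgroup_compact. Qed.

End CompactOpenSubgroup.

Lemma compact_open_subgroup_below k (K : 'I_k -> set G) :
  (forall j, compact_open_subgroup mul inv one (K j)) ->
  exists K0, compact_open_subgroup mul inv one K0 /\ forall j, K0 `<=` K j.
Proof.
move=> HK; have [K0 [HK0 K0K]] := compact_open_subgroup_basis
  (filter_forall _ (fun j => subgroup_nbhs (HK j))).
by exists K0; split => // j x /K0K; apply.
Qed.

(* Compactness of the support turns the local invariance of [F] near each
   point into a single neighbourhood of [one], hence a single subgroup. *)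
Lemma uniform_right_invariance (Y : topologicalType) (W : Type) (F : G * Y -> W)
    (w0 : W) (S : set (G * Y)) :
  locally_constant F -> compact S -> (forall p, F p <> w0 -> S p) ->
  exists K, compact_open_subgroup mul inv one K /\
    forall g y k, K k -> F (mul g k, y) = F (g, y).
Proof.
move=> lF cS hS.
have cphi : continuous (fun q : (G * Y) * G => (mul q.1.1 q.2, q.1.2)).
  apply: continuous_pair => [|q]; last by apply: cvg_comp; [exact: cvg_fst|exact: cvg_snd].
  apply: (continuous_mul (f := fun q : (G * Y) * G => q.1.1) (g := snd)) => q.
    by apply: cvg_comp; exact: cvg_fst.
  exact: cvg_snd.
have near_one : \forall k \near one, forall p, S p -> F (mul p.1 k, p.2) = F p.
  apply: ((compact_near_coveringP S).1 cS G (nbhs one)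
    (fun k p => F (mul p.1 k, p.2) = F p)) => p _.
  have phi_p : (mul p.1 one, p.2) = p by rewrite mulg1; case: p.
  have := cphi (p, one) _ (lF (mul p.1 one, p.2)); rewrite phi_p => near_phi.
  have near_fst : \forall q \near (p, one), F q.1 = F p.
    have cfst : continuous (fst : (G * Y) * G -> G * Y) by move=> r; exact: cvg_fst.
    exact: (cfst (p, one) _ (lF p)).
  by apply: filterS (filterI near_fst near_phi) => -[q k] /= [-> ->].
have [K [HK KU]] := compact_open_subgroup_basis near_one.
exists K; split => // g y k Kk.
have [Fgk|/hS Sgk] := pselect (F (mul g k, y) = w0); last first.
  by rewrite -[in RHS](mulgK k g) (KU _ (subgroupV HK Kk) _ Sgk).
have [Fg|/hS Sg] := pselect (F (g, y) = w0); first by rewrite Fgk Fg.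
exact: (KU _ Kk _ Sg).
Qed.

End LGroup.

Section Chains.
Variables (G : ptopologicalType) (mul : G -> G -> G) (inv : G -> G) (one : G).
Hypothesis HG : is_lgroup mul inv one.
Variable n : nat.

Definition partial_product (g : G) (gs : 'I_n -> G) (i : nat) :=
  foldl mul g (take i (map gs (enum 'I_n))).

Lemma partial_productS g (gs : 'I_n -> G) i (hi : (i < n)%N) :
  partial_product g gs i.+1 = mul (partial_product g gs i) (gs (Ordinal hi)).
Proof.
rewrite /partial_product (take_nth (gs (Ordinal hi))) ?size_map ?size_enum_ord //.
rewrite foldl_rcons (nth_map (Ordinal hi)) ?size_enum_ord //; congr (mul _ (gs _)).
  by apply: val_inj; rewrite /= nth_enum_ord.
by rewrite -enumT size_enum_ord.
Qed.

Lemma chain_point0 g (gs : 'I_n -> G) : chain_point mul g gs ord0 = g.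
Proof. by rewrite /chain_point take0. Qed.

Lemma chain_pointM a g (gs : 'I_n -> G) :
  chain_point mul (mul a g) gs = fun i => mul a (chain_point mul g gs i).
Proof.
apply: funext => i; rewrite /chain_point.
by elim: (take _ _) g => //= x l IH g; rewrite -(mulgA HG) IH.
Qed.

Definition chain_diff (y : 'I_n.+1 -> G) : 'I_n -> G :=
  fun i => mul (inv (y (widen_ord (leqnSn n) i))) (y (lift ord0 i)).

Lemma chain_pointK g (gs : 'I_n -> G) : chain_diff (chain_point mul g gs) = gs.
Proof.
apply: funext => i; rewrite /chain_diff /chain_point.
have := partial_productS g gs (ltn_ord i); rewrite /partial_product => ->.
by rewrite (mulKg HG); congr gs; apply: val_inj.
Qed.

Lemma chain_diffK (y : 'I_n.+1 -> G) : chain_point mul (y ord0) (chain_diff y) = y.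
Proof.
apply: funext => -[k hk]; rewrite /chain_point /=.
elim: k hk => [|k IH] hk; first by rewrite take0 /=; congr y; apply: val_inj.
have hk' : (k < n)%N by lia.
have := partial_productS (y ord0) (chain_diff y) hk'; rewrite /partial_product => ->.
rewrite (IH (ltnW hk)) /chain_diff.
have -> : widen_ord (leqnSn n) (Ordinal hk') = Ordinal (ltnW hk) by apply: val_inj.
by rewrite (mulKVg HG); congr y; apply/val_inj.
Qed.

Lemma chain_diffM a (y : 'I_n.+1 -> G) : chain_diff (fun i => mul a (y i)) = chain_diff y.
Proof. by apply: funext => i; rewrite /chain_diff (invMg HG) -(mulgA HG) (mulKg HG). Qed.

Lemma continuous_chain_point : continuous (fun p : G * {ptws 'I_n -> G} =>
  (chain_point mul p.1 p.2 : {ptws 'I_n.+1 -> G})).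
Proof.
apply: continuous_ptws => -[k hk]; rewrite /chain_point /=.
elim: k hk => [|k IH] hk.
  by under [X in continuous X]funext => p do rewrite take0; move=> p; exact: cvg_fst.
have hk' : (k < n)%N by lia.
under [X in continuous X]funext => p do rewrite -/(partial_product _ _ _) partial_productS.
apply: (continuous_mul HG); first exact: (IH (ltnW hk)).
move=> p; apply: (@continuous_comp _ _ _ snd (fun y : {ptws 'I_n -> G} => y (Ordinal hk'))).
  exact: cvg_snd.
exact: ptws_proj_continuous.
Qed.

Lemma continuous_chain_diff :
  continuous (fun y : {ptws 'I_n.+1 -> G} => (chain_diff y : {ptws 'I_n -> G})).
Proof.
apply: continuous_ptws => i; apply: (continuous_mul HG).
  by apply: (continuous_inv HG); exact: ptws_proj_continuous.
exact: ptws_proj_continuous.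
Qed.

End Chains.

Section SmoothModule.
Variables (R : realType) (G : ptopologicalType) (mul : G -> G -> G) (inv : G -> G) (one : G).
Hypothesis HG : is_lgroup mul inv one.
Variables (V : lmodType R[i]) (act : G -> V -> V).
Hypothesis HV : is_smooth_module mul inv one act.

Lemma act1 v : act one v = v.
Proof. by case: HV => _ h _ _; apply: h. Qed.
Lemma actM g h v : act (mul g h) v = act g (act h v).
Proof. by case: HV => _ _ e _; apply: e. Qed.
Lemma act_is_linear g : linear (act g).
Proof. by case: HV => h _ _ _; apply: h. Qed.

HB.instance Definition _ g := GRing.isLinear.Build _ _ _ _ (act g) (act_is_linear g).

Lemma actKV g v : act (inv g) (act g v) = v.
Proof. by rewrite -actM (mulVg HG) act1. Qed.
Lemma actK g v : act g (act (inv g) v) = v.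
Proof. by rewrite -actM (mulgV HG) act1. Qed.

Lemma locally_constant_act (X : topologicalType) (a : X -> G) (w : X -> V) :
  continuous a -> locally_constant w -> locally_constant (fun x => act (a x) (w x)).
Proof.
move=> ca lw y; have [K [HK fixK]] : exists K, compact_open_subgroup mul inv one K /\
    forall k, K k -> act k (w y) = w y by case: HV => _ _ _; apply.
have cst : continuous (fun _ : X => inv (a y)) by move=> ?; exact: cvg_cst.
have cK : (fun z => mul (inv (a y)) (a z)) @ y --> one.
  by rewrite -(mulVg HG (a y)); exact: (continuous_mul HG cst ca).
have nK : \forall z \near y, K (mul (inv (a y)) (a z)).
  exact: (cK _ (subgroup_nbhs HK)).
apply: filter_app (lw y); apply: filterS nK => z Kz ->.
by rewrite -{1}(mulKVg HG (a y) (a z)) actM fixK.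
Qed.

Variable n : nat.

Definition lift_fun (K : set G) (w : {ptws 'I_n -> G} -> V) : {ptws 'I_n.+1 -> G} -> V :=
  fun y => if `[< K (y ord0) >] then act (y ord0) (w (chain_diff mul inv y)) else 0.

Lemma lift_fun_Cc K w : compact_open_subgroup mul inv one K -> Cc_infty w ->
  Cc_infty (lift_fun K w).
Proof.
move=> HK [lw cw]; have cy0 := @ptws_proj_continuous _ G (@ord0 n).
split.
  move=> y; rewrite /lift_fun; have [Ky|Ky] := pselect (K (y ord0)).
    have nK : \forall z \near y, K (z ord0).
      by apply: cy0; apply: open_nbhs_nbhs; split => //; exact: (subgroup_open HK).
    have lc := locally_constant_act cy0
      (locally_constant_comp lw (continuous_chain_diff (n := n) HG)) y.
    by apply: filter_app lc; apply: filterS nK => z Kz /= ->; rewrite !asboolT.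
  have nK : \forall z \near y, ~ K (z ord0).
    apply: (cy0 y (~` K)); apply: open_nbhs_nbhs; split => //.
    exact/closed_openC/(subgroup_closed HG HK).
  by apply: filterS nK => z Kz /=; rewrite !asboolF.
apply: (compact_closure_subset (hausdorff_product (fun=> lgroup_hausdorff HG))
  (E := (fun p : G * {ptws 'I_n -> G} => (chain_point mul p.1 p.2 : {ptws 'I_n.+1 -> G}))
   @` (K `*` closure [set y | w y != 0]))).
  apply: continuous_compact.
    by apply: continuous_subspaceT; exact: (continuous_chain_point HG).
  by apply: compact_setX => //; exact: (subgroup_compact HK).
move=> y /=; rewrite /lift_fun; have [Ky|Ky] := pselect (K (y ord0)); last first.
  by rewrite asboolF // eqxx.
rewrite asboolT // => hy; exists (y ord0, chain_diff mul inv y); last exact: (chain_diffK HG).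
split => //=; apply: subset_closure => /=.
by apply: contraNN hy => /eqP ->; rewrite linear0.
Qed.

End SmoothModule.

Section LocallyConstantIntegral.
Variables (R : realType) (G : ptopologicalType) (mul : G -> G -> G) (inv : G -> G) (one : G).
Hypothesis HG : is_lgroup mul inv one.
Variable mu : {measure set (borel G) -> \bar R}.
Hypothesis Hmu : is_left_haar mul mu.
Variable V : lmodType R[i].

Local Open Scope complex_scope.

Lemma open_measurable (U : set G) : open U -> measurable (U : set (borel G)).
Proof. by move=> oU; apply: sub_gen_smallest. Qed.

Lemma haar_compact_fin_num (U : set G) : compact U -> mu U \is a fin_num.
Proof. by move=> cU; rewrite ge0_fin_numE //; case: Hmu => _ h _ _ _; apply: h. Qed.

Lemma haar_subset_compact_fin_num (U W : set G) : compact W ->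
  measurable (U : set (borel G)) -> U `<=` W -> mu U \is a fin_num.
Proof.
move=> cW mU UW; rewrite ge0_fin_numE //; apply: (le_lt_trans (y := mu W)).
  apply: le_measure; rewrite ?inE //; rewrite -[W]setCK; apply: measurableC.
  apply: open_measurable; apply: closed_openC.
  exact: compact_closed (lgroup_hausdorff HG) cW.
by rewrite -ge0_fin_numE //; exact: haar_compact_fin_num.
Qed.

Lemma haar_lmul (g : G) (U : set G) : open U -> mu (mul g @` U) = mu U.
Proof. by move=> oU; case: Hmu => h _ _ _ _; rewrite h //; exact: open_measurable. Qed.

Lemma haar_subgroup_neq0 (K : set G) : compact_open_subgroup mul inv one K ->
  fine (mu K) != 0.
Proof.
move=> HK; have hp : (0 < mu K)%E.
  by case: Hmu => _ _ h _ _; apply: h; [exact: subgroup_open HK|exists one; exact: subgroup1 HK].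
by rewrite gt_eqF // -lte_fin fineK //; exact/haar_compact_fin_num/(subgroup_compact HK).
Qed.

Lemma measure_partition k (W : 'I_k -> set G) (U : set G) :
  measurable (U : set (borel G)) -> (forall j, measurable (W j : set (borel G))) ->
  (forall j j', j != j' -> W j `&` W j' = set0) -> (forall x, U x -> exists j, W j x) ->
  mu U = \sum_(j < k) mu (U `&` W j).
Proof.
move=> mU mW dW cov.
have UE : U = \big[setU/set0]_(j < k) (U `&` W j) :> set G.
  apply/seteqP; split => x; last by move/in_bigsetU_ord => [j []].
  by move=> Ux; apply/in_bigsetU_ord; have [j Wj] := cov x Ux; exists j.
rewrite {1}UE (measure_bigsetU_ord mu xpredT) // => [j|i j _ _ [x [[_ Wi] [_ Wj]]]].
  exact: measurableI.
apply/eqP; apply: contraT => ij.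
by have : (W i `&` W j) x by []; rewrite (dW i j ij).
Qed.

Section Refinement.
Variables (h : G -> V) (k : nat) (U : 'I_k -> set G) (c : 'I_k -> V).
Variables (k' : nat) (U' : 'I_k' -> set G).
Hypotheses (hU : forall j, compact (U j) /\ open (U j)) (hc : forall j x, U j x -> h x = c j).
Hypotheses (hU' : forall j, compact (U' j) /\ open (U' j))
  (dU' : forall j j', j != j' -> U' j `&` U' j' = set0)
  (cov' : forall x, h x != 0 -> exists j, U' j x).

Lemma lc_sum_refine :
  \sum_(j < k) (fine (mu (U j)))%:C *: c j =
  \sum_(j < k) \sum_(j' < k') (fine (mu (U j `&` U' j')))%:C *: c j.
Proof.
apply: eq_bigr => j _; have [cU oU] := hU j.
have [->|cj0] := eqVneq (c j) 0; first by rewrite scaler0 big1 // => j' _; rewrite scaler0.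
rewrite -scaler_suml -rmorph_sum (@measure_partition k' U') //.
- rewrite -sum_fine // => j' _; apply: (haar_subset_compact_fin_num cU) => //.
  by apply: measurableI; apply: open_measurable => //; case: (hU' j').
- exact: open_measurable.
- by move=> j'; apply: open_measurable; case: (hU' j').
- by move=> x Ux; apply: cov'; rewrite (hc Ux).
Qed.

End Refinement.

Lemma is_lc_integral_unique (h : G -> V) v1 v2 :
  is_lc_integral mu h v1 -> is_lc_integral mu h v2 -> v1 = v2.
Proof.
move=> [k [U [c [hU dU hc cov ->]]]] [k' [U' [c' [hU' dU' hc' cov' ->]]]].
rewrite (lc_sum_refine hU hc hU' dU' cov') (lc_sum_refine hU' hc' hU dU cov) exchange_big.
apply: eq_bigr => j _; apply: eq_bigr => j' _; rewrite [U' j `&` _]setIC.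
have [[x [Ux U'x]]|nx] := pselect (exists x, U j' x /\ U' j x).
  by rewrite -(hc _ _ Ux) (hc' _ _ U'x).
have -> : U j' `&` U' j = set0 by apply/seteqP; split => x // [U'x Ux]; apply: nx; exists x.
by rewrite measure0 /= !rmorph0 !scale0r.
Qed.

Lemma lc_integralE (h : G -> V) v : is_lc_integral mu h v -> lc_integral mu h = v.
Proof. by move=> hv; apply: xget_unique => // y /is_lc_integral_unique; apply. Qed.

Lemma is_lc_integral_translate (h : G -> V) v g :
  is_lc_integral mu h v -> is_lc_integral mu (fun x => h (mul (inv g) x)) v.
Proof.
move=> [k [U [c [hU dU hc cov ->]]]].
have gUE j : mul g @` U j = mul (inv g) @^-1` U j.
  apply/seteqP; split => y /=; first by case=> x Ux <-; rewrite (mulKg HG).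
  by move=> Uy; exists (mul (inv g) y) => //; rewrite (mulKVg HG).
exists k, (fun j => mul g @` U j), c; split.
- move=> j; have [cU oU] := hU j; split.
    exact: (lmul_compact HG).
  by rewrite gUE; apply: open_comp oU => y _; exact: (lmul_continuous HG).
- move=> j j' jj'; rewrite !gUE -preimage_setI (dU j j' jj'); exact: preimage_set0.
- by move=> j y; rewrite gUE => /hc.
- by move=> y /cov [j Uj]; exists j; rewrite gUE.
- by apply: eq_bigr => j _; rewrite haar_lmul //; case: (hU j).
Qed.

Definition right_invariant (K : set G) (h : G -> V) := forall g k, K k -> h (mul g k) = h g.

Section CosetPartition.
Variables (K : set G) (k : nat) (x : 'I_k -> G) (b : 'I_k -> bool).
Hypothesis HK : compact_open_subgroup mul inv one K.

Definition cell j : set G := if b j then lcoset mul inv K (x j) else set0.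

Definition coset_partition (C : set G) :=
  (forall j j', j != j' -> cell j `&` cell j' = set0) /\ (forall y, C y -> exists j, cell j y).

Lemma cell_compact_open j : compact (cell j) /\ open (cell j).
Proof.
rewrite /cell; case: (b j); last by split; [exact: compact0|exact: open0].
by split; [exact: (lcoset_compact HG HK)|exact: (lcoset_open HG)].
Qed.

Lemma haar_cell j : fine (mu (cell j)) = if b j then fine (mu K) else 0.
Proof.
rewrite /cell; case: (b j); rewrite ?measure0 // (lcosetE HG) haar_lmul //.
exact: subgroup_open HK.
Qed.

Lemma right_invariant_cell (h : G -> V) j y : right_invariant K h -> cell j y -> h y = h (x j).
Proof. by rewrite /cell => hK; case: (b j) => // Ky; rewrite -(mulKVg HG (x j) y) hK. Qed.

Variable C : set G.
Hypothesis hpart : coset_partition C.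

Lemma coset_partition_integral (h : G -> V) :
  right_invariant K h -> (forall g, h g != 0 -> C g) ->
  is_lc_integral mu h (\sum_(j < k) (fine (mu (cell j)))%:C *: h (x j)).
Proof.
case: hpart => dU cU hK hC; exists k, cell, (fun j => h (x j)); split => //.
- exact: cell_compact_open.
- by move=> j y; exact: right_invariant_cell.
- by move=> y /hC /cU.
Qed.

Lemma coset_partition_point (h : G -> V) y :
  right_invariant K h -> (forall g, h g != 0 -> C g) ->
  h y = \sum_(j < k) (if `[< cell j y >] then h (x j) else 0).
Proof.
case: hpart => dU cU hK hC.
have [[j0 Uj0]|nU] := pselect (exists j, cell j y); last first.
  rewrite big1 => [|j _]; last by rewrite asboolF // => Uj; apply: nU; exists j.
  by apply/eqP; apply: contraT => /hC /cU [j Uj]; exfalso; apply: nU; exists j.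
rewrite (bigD1 j0) //= asboolT // big1 ?addr0; first exact: right_invariant_cell Uj0.
move=> j jj0; rewrite asboolF // => Uj.
by have : (cell j `&` cell j0) y by []; rewrite dU.
Qed.

End CosetPartition.

Section GreedyCosets.
Variables (K : set G) (k : nat) (x : 'I_k -> G).
Hypothesis HK : compact_open_subgroup mul inv one K.

(* greedy choice of one representative per coset *)
Definition first_in_coset (j : 'I_k) :=
  `[< ~ exists l : 'I_k, (l < j)%N /\ K (mul (inv (x l)) (x j)) >].

Lemma first_in_coset_disjoint j j' :
  j != j' -> cell K x first_in_coset j `&` cell K x first_in_coset j' = set0.
Proof.
suff key (i i' : 'I_k) y : (i' < i)%N -> cell K x first_in_coset i y ->
    cell K x first_in_coset i' y -> False.
  move=> jj'; apply/seteqP; split => y // [U1 U2].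
  case: (ltngtP j j') => [h|h|/val_inj e]; [exact: (key j' j y)|exact: (key j j' y)|].
  by move: jj'; rewrite e eqxx.
move=> ii'; rewrite /cell; case bi : (first_in_coset i) => //.
case: (first_in_coset i') => // Ky Ky'; move: bi; rewrite /first_in_coset asboolF //.
apply; exists i'; split => //; have := subgroupMV HK Ky' Ky.
by rewrite (invMg HG) (invgK HG) -(mulgA HG) (mulKVg HG).
Qed.

Lemma first_in_coset_cover y j : K (mul (inv (x j)) y) ->
  exists j', cell K x first_in_coset j' y.
Proof.
case: j => j hj; elim/ltn_ind: j hj => j IH hj Kj.
case bj : (first_in_coset (Ordinal hj)); first by exists (Ordinal hj); rewrite /cell bj.
have [l [lj Kl]] : exists l : 'I_k, (l < j)%N /\ K (mul (inv (x l)) (x (Ordinal hj))).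
  by apply: contrapT => nh; move: bj; rewrite /first_in_coset asboolT.
case: l lj Kl => l hl /= lj Kl; apply: (IH l lj hl); have := subgroupM HG HK Kl Kj.
by rewrite -(mulgA HG) (mulKVg HG).
Qed.

End GreedyCosets.

Lemma coset_partition_exists (K C : set G) : compact_open_subgroup mul inv one K -> compact C ->
  exists k (x : 'I_k -> G) (b : 'I_k -> bool), coset_partition K x b C.
Proof.
move=> HK cC; have cov : C `<=` cover C (lcoset mul inv K).
  by move=> y Cy; exists y => //; exact: (lcoset_refl HG HK).
move: (cC); rewrite compact_cover => /(_ G C (lcoset mul inv K)).
move=> /(_ (fun x _ => lcoset_open HG HK x) cov) [D _ covD].
pose s := finmap.enum_fset D; pose x (j : 'I_(size s)) := nth one s j.
exists (size s), x, (first_in_coset K x); split; first exact: first_in_coset_disjoint.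
move=> y /covD [x0 x0D Kx0]; have x0s : (index x0 s < size s)%N by rewrite index_mem.
by apply: (first_in_coset_cover HK (j := Ordinal x0s)); rewrite /x /= nth_index.
Qed.

(* Integrating against the finite family of cells of one coset partition,
   left invariance of [mu] makes each translate integrate like the original. *)
Lemma lc_integral_span_translate_sub (K : set G) k (c : 'I_k -> R[i]) (a : 'I_k -> G)
    (h : 'I_k -> G -> V) (C : 'I_k -> set G) :
  compact_open_subgroup mul inv one K -> (forall j, compact (C j)) ->
  (forall j, right_invariant K (h j)) -> (forall j x, h j x != 0 -> C j x) ->
  lc_integral mu (fun x => \sum_(j < k) c j *: (h j (mul (inv (a j)) x) - h j x)) = 0.
Proof.
move=> HK cC hK hC.
pose C0 := \big[setU/set0]_(j < k) (C j `|` mul (a j) @` C j).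
have cC0 : compact C0.
  by apply: bigsetU_compact => j _; apply: compactU => //; exact: (lmul_compact HG).
have [kx [x [b hpart]]] := coset_partition_exists HK cC0.
pose m u := (fine (mu (cell K x b u)))%:C.
have C0_left j y : h j (mul (inv (a j)) y) != 0 -> C0 y.
  move=> /hC Cy; apply/in_bigsetU_ord; exists j; right.
  by exists (mul (inv (a j)) y) => //; rewrite (mulKVg HG).
have C0_right j y : h j y != 0 -> C0 y.
  by move=> /hC Cy; apply/in_bigsetU_ord; exists j; left.
have translate_eq j :
    \sum_(u < kx) m u *: h j (mul (inv (a j)) (x u)) = \sum_(u < kx) m u *: h j (x u).
  apply: (is_lc_integral_unique (h := fun y => h j (mul (inv (a j)) y))).
    apply: (coset_partition_integral HK hpart _ (C0_left j)) => g kk Kk.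
    by rewrite (mulgA HG) hK.
  exact/is_lc_integral_translate/(coset_partition_integral HK hpart (hK j) (C0_right j)).
apply: lc_integralE; set F := fun x => \sum_(j < k) _.
have -> : 0 = \sum_(u < kx) m u *: F (x u).
  under eq_bigr do rewrite scaler_sumr; rewrite exchange_big big1 // => j _.
  under eq_bigr do rewrite scalerA mulrC -scalerA scalerBr.
  by rewrite -scaler_sumr sumrB translate_eq subrr scaler0.
apply: (coset_partition_integral HK hpart).
  by move=> g kk Kk; rewrite /F; apply: eq_bigr => j _; rewrite (mulgA HG) !(hK j _ kk Kk).
move=> y; rewrite /F => Fy; apply: contrapT => nC; move/eqP: Fy; apply; apply: big1 => j _.
have hl : h j (mul (inv (a j)) y) = 0.
  by apply/eqP; apply: contraT => /C0_left.
have hr : h j y = 0.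
  by apply/eqP; apply: contraT => /C0_right.
by rewrite hl hr subrr scaler0.
Qed.

End LocallyConstantIntegral.

Section Tn.
Variables (R : realType) (G : ptopologicalType) (mul : G -> G -> G) (inv : G -> G) (one : G).
Hypothesis HG : is_lgroup mul inv one.
Variable mu : {measure set (borel G) -> \bar R}.
Hypothesis Hmu : is_left_haar mul mu.
Variables (V : lmodType R[i]) (act : G -> V -> V).
Hypothesis HV : is_smooth_module mul inv one act.
Variable n : nat.

Local Open Scope complex_scope.

Implicit Types (f : {ptws 'I_n.+1 -> G} -> V) (w : {ptws 'I_n -> G} -> V).
Implicit Types (y : {ptws 'I_n.+1 -> G}) (gs : {ptws 'I_n -> G}) (K : set G).

HB.instance Definition _ g := GRing.isLinear.Build _ _ _ _ (act g) (act_is_linear HV g).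

Definition integrand (f : {ptws 'I_n.+1 -> G} -> V) (p : G * {ptws 'I_n -> G}) : V :=
  act (inv p.1) (f (chain_point mul p.1 p.2)).

Lemma TnE f gs : Tn mul inv mu act f gs = lc_integral mu (fun g => integrand f (g, gs)).
Proof. by []. Qed.

Lemma integrand_neq0 f p : integrand f p != 0 -> f (chain_point mul p.1 p.2) != 0.
Proof. by apply: contraNN => /eqP e; rewrite /integrand e linear0. Qed.

Lemma integrand_lc f : Cc_infty f -> locally_constant (integrand f).
Proof.
move=> [lf _]; apply: (locally_constant_act HG HV (a := fun p => inv p.1)).
  by apply: (continuous_inv HG) => p; exact: cvg_fst.
exact: (locally_constant_comp lf (continuous_chain_point (n := n) HG)).
Qed.

Lemma compact_support_chain_diff f (h : {ptws 'I_n -> G} -> V) : Cc_infty f ->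
  (forall gs, h gs != 0 -> exists g, f (chain_point mul g gs) != 0) ->
  compact (closure [set gs | h gs != 0]).
Proof.
move=> [_ cf] hf; apply: (compact_closure_subset (hausdorff_product (fun=> lgroup_hausdorff HG))
  (E := (fun y : {ptws 'I_n.+1 -> G} => (chain_diff mul inv y : {ptws 'I_n -> G}))
    @` closure [set y | f y != 0])).
  by apply: continuous_compact cf; apply: continuous_subspaceT; exact: (continuous_chain_diff HG).
move=> gs /hf [g fg]; exists (chain_point mul g gs); last exact: (chain_pointK HG).
exact: subset_closure.
Qed.

Lemma integrand_slice_Cc f g : Cc_infty f ->
  Cc_infty (fun gs : {ptws 'I_n -> G} => integrand f (g, gs)).
Proof.
move=> hf; split.
  apply: (locally_constant_comp (phi := fun gs : {ptws 'I_n -> G} => (g, gs)) (integrand_lc hf)).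
  by apply: continuous_pair => gs; [exact: cvg_cst|exact: cvg_id].
by apply: (compact_support_chain_diff hf) => gs /integrand_neq0 fg; exists g.
Qed.

Lemma integrand_uniformly_smooth f : Cc_infty f -> exists K C,
  [/\ compact_open_subgroup mul inv one K, compact C,
      (forall gs, right_invariant mul K (fun g => integrand f (g, gs))) &
      (forall gs g, integrand f (g, gs) != 0 -> C g)].
Proof.
move=> hf; have [_ cf] := hf.
pose S := (fun y : {ptws 'I_n.+1 -> G} => (y ord0, (chain_diff mul inv y : {ptws 'I_n -> G})))
  @` closure [set y | f y != 0].
have cS : compact S.
  apply: continuous_compact cf; apply/continuous_subspaceT/continuous_pair.
    exact: ptws_proj_continuous.
  exact: (continuous_chain_diff HG).
have hS p : integrand f p <> 0 -> S p.
  move=> /eqP /integrand_neq0 fp; exists (chain_point mul p.1 p.2); first exact: subset_closure.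
  by rewrite chain_point0 (chain_pointK HG); case: p {fp}.
have [K [HK RK]] := uniform_right_invariance HG (integrand_lc hf) cS hS.
exists K, ((fun y : {ptws 'I_n.+1 -> G} => y ord0) @` closure [set y | f y != 0]); split => //.
- by apply: continuous_compact cf; apply: continuous_subspaceT; exact: ptws_proj_continuous.
- by move=> gs g k Kk; apply: RK.
- move=> gs g /integrand_neq0 fg; exists (chain_point mul g gs); first exact: subset_closure.
  exact: chain_point0.
Qed.

Lemma Tn_coset_sum f : Cc_infty f -> exists K C k (x : 'I_k -> G) b,
  [/\ compact_open_subgroup mul inv one K, coset_partition mul inv K x b C,
      (forall gs, right_invariant mul K (fun g => integrand f (g, gs))),
      (forall gs g, integrand f (g, gs) != 0 -> C g) &
      forall gs, Tn mul inv mu act f gs =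
        \sum_(j < k) (fine (mu (cell mul inv K x b j)))%:C *: integrand f (x j, gs)].
Proof.
move=> hf; have [K [C [HK cC RK SC]]] := integrand_uniformly_smooth hf.
have [k [x [b hpart]]] := coset_partition_exists HG HK cC.
exists K, C, k, x, b; split => // gs.
rewrite TnE; exact: (lc_integralE HG Hmu (coset_partition_integral HG mu HK hpart (RK gs) (SC gs))).
Qed.

Lemma Tn_Cc f : Cc_infty f -> Cc_infty (Tn mul inv mu act f).
Proof.
move=> hf; have [K [C [k [x [b [HK hpart RK SC TE]]]]]] := Tn_coset_sum hf.
split.
  move=> gs; have near_slices :
      \forall gs' \near gs, forall j, integrand f (x j, gs') = integrand f (x j, gs).
    apply: (@filter_forall _ _ (fun j gs' => integrand f (x j, gs') = integrand f (x j, gs))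
      _ (nbhs_filter gs)) => j.
    exact: (integrand_slice_Cc (x j) hf).1.
  by apply: filterS near_slices => gs' e; rewrite !TE; apply: eq_bigr => j _; rewrite e.
apply: (compact_support_chain_diff hf) => gs; rewrite TE => hs.
have [j hj] : exists j, integrand f (x j, gs) != 0.
  apply: contrapT => nj; move/eqP: hs; apply; apply: big1 => j _.
  suff -> : integrand f (x j, gs) = 0 by rewrite scaler0.
  by apply/eqP; apply: contraT => hj; exfalso; apply: nj; exists j.
by exists (x j); exact: integrand_neq0 hj.
Qed.

Lemma integrand_lift_fun K w g gs :
  integrand (lift_fun mul inv act K w) (g, gs) = if `[< K g >] then w gs else 0.
Proof.
rewrite /integrand /lift_fun /= chain_point0 (chain_pointK HG).
by case: ifP => _; [rewrite (actKV HG HV)|rewrite linear0].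
Qed.

Lemma Tn_surjective h : Cc_infty h ->
  exists f : {ptws 'I_n.+1 -> G} -> V, Cc_infty f /\ Tn mul inv mu act f = h.
Proof.
move=> [lh ch]; have [K [HK _]] := compact_open_subgroup_basis HG (@filterT _ (nbhs one) _).
pose w gs := ((fine (mu K))^-1)%:C *: h gs.
have hw : Cc_infty w.
  split; first by move=> y; apply: filterS (lh y) => z /= e; rewrite /w e.
  apply: (compact_closure_subset (hausdorff_product (fun=> lgroup_hausdorff HG)) ch).
  move=> y /= hy; apply: subset_closure; apply: contraNN hy => /eqP hy0.
  by rewrite /w hy0 scaler0.
exists (lift_fun mul inv act K w); split; first exact: (lift_fun_Cc HG HV HK).
apply: funext => gs; apply: (lc_integralE HG Hmu).
exists 1, (fun _ => K), (fun _ => w gs); split.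
- by move=> _; split; [exact: (subgroup_compact HK)|exact: (subgroup_open HK)].
- by move=> j j'; rewrite !ord1 eqxx.
- by move=> _ g Kg; have := integrand_lift_fun K w g gs; rewrite /integrand /= asboolT.
- move=> g; have := integrand_lift_fun K w g gs; rewrite /integrand /= => ->.
  by have [Kg|Kg] := pselect (K g); [exists ord0|rewrite asboolF // eqxx].
- rewrite big_ord1 /w scalerA -rmorphM mulfV ?rmorph1 ?scale1r //.
  exact: (haar_subgroup_neq0 Hmu HK).
Qed.

Lemma fun_act_lift_fun K w a y :
  fun_act mul inv act a (lift_fun mul inv act K w) y =
  if `[< lcoset mul inv K a (y ord0) >] then act (y ord0) (w (chain_diff mul inv y)) else 0.
Proof.
rewrite /fun_act /lift_fun /= (chain_diffM HG).
have -> : `[< lcoset mul inv K a (y ord0) >] = `[< K (mul (inv a) (y ord0)) >] by [].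
by case: ifP => _; rewrite ?linear0 // -(actM HV) (mulKVg HG).
Qed.

Lemma Tn_kernel_span f : Cc_infty f -> Tn mul inv mu act f = (fun _ => 0) ->
  exists k (c : 'I_k -> R[i]) (g : 'I_k -> G) (fs : 'I_k -> {ptws 'I_n.+1 -> G} -> V),
    (forall j, Cc_infty (fs j)) /\
    forall y, f y = \sum_(j < k) c j *: (fun_act mul inv act (g j) (fs j) y - fs j y).
Proof.
move=> hf T0; have [K [C [k [x [b [HK hpart RK SC TE]]]]]] := Tn_coset_sum hf.
pose w j gs := if b j then integrand f (x j, gs) else 0.
have w_sum gs : \sum_(j < k) w j gs = 0.
  have : (fine (mu K))%:C *: \sum_(j < k) w j gs = 0.
    rewrite -[RHS](congr1 (fun F => F gs) T0) TE scaler_sumr; apply: eq_bigr => j _.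
    by rewrite (haar_cell HG Hmu) // /w; case: (b j); rewrite ?rmorph0 ?scale0r ?scaler0.
  by move/eqP; rewrite scaler_eq0 fmorph_eq0 (negbTE (haar_subgroup_neq0 Hmu HK)) => /eqP.
pose fs j := lift_fun mul inv act K (w j).
exists k, (fun _ => 1), x, fs; split.
  move=> j; apply: (lift_fun_Cc HG HV HK); rewrite /w; case: (b j).
    exact: integrand_slice_Cc.
  split; first exact: locally_constant_cst.
  have -> : [set gs : {ptws 'I_n -> G} | (0 : V) != 0] = set0.
    by apply/seteqP; split => gs //=; rewrite eqxx.
  by rewrite closure0; exact: compact0.
move=> y; under eq_bigr do rewrite scale1r; rewrite sumrB.
have -> : \sum_(j < k) fs j y = 0.
  rewrite /fs /lift_fun; have [Ky|Ky] := pselect (K (y ord0)); last first.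
    by rewrite asboolF // big1.
  by rewrite asboolT // -(raddf_sum (act (y ord0))) w_sum raddf0.
have term j : fun_act mul inv act (x j) (fs j) y = act (y ord0)
    (if `[< cell mul inv K x b j (y ord0) >] then integrand f (x j, chain_diff mul inv y) else 0).
  rewrite fun_act_lift_fun /w /cell; case: (b j); first by case: ifP => _; rewrite ?raddf0.
  by rewrite (@asboolF (set0 _)) // raddf0; case: ifP => _; rewrite ?raddf0.
under eq_bigr do rewrite term.
rewrite subr0 -(raddf_sum (act (y ord0))) -(coset_partition_point HG hpart _ (RK _) (SC _)).
by rewrite /integrand /= (actK HG HV) (chain_diffK HG).
Qed.

Lemma integrand_span_fun_act k (c : 'I_k -> R[i]) (a : 'I_k -> G)
    (fs : 'I_k -> {ptws 'I_n.+1 -> G} -> V) gs :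
  (fun g => integrand (fun y => \sum_(j < k) c j *:
     (fun_act mul inv act (a j) (fs j) y - fs j y)) (g, gs)) =
  (fun g => \sum_(j < k) c j *:
     (integrand (fs j) (mul (inv (a j)) g, gs) - integrand (fs j) (g, gs))).
Proof.
apply: funext => g; rewrite /integrand linear_sum; apply: eq_bigr => j _.
rewrite linearZ linearB /fun_act /= -(chain_pointM HG).
by rewrite (invMg HG) (invgK HG) (actM HV).
Qed.

Lemma Tn_span_kernel k (c : 'I_k -> R[i]) (a : 'I_k -> G)
    (fs : 'I_k -> {ptws 'I_n.+1 -> G} -> V) : (forall j, Cc_infty (fs j)) ->
  Tn mul inv mu act (fun y => \sum_(j < k) c j *: (fun_act mul inv act (a j) (fs j) y - fs j y))
  = (fun _ => 0).
Proof.
move=> hfs; have [KK /choice [CC hKC]] := choice (fun j => integrand_uniformly_smooth (hfs j)).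
have [K0 [HK0 K0K]] := compact_open_subgroup_below HG
  (fun j => let: And4 HK _ _ _ := hKC j in HK).
apply: funext => gs; rewrite TnE integrand_span_fun_act.
apply: (lc_integral_span_translate_sub HG Hmu c a
  (h := fun j g => integrand (fs j) (g, gs)) (C := CC) HK0).
- by move=> j; have [_ cC _ _] := hKC j.
- by move=> j g kk Kk; have [_ _ RK _] := hKC j; apply/RK/K0K.
- by move=> j g; have [_ _ _ SC] := hKC j; exact: SC.
Qed.

End Tn.

Unset Implicit Arguments.
Set Strict Implicit.

Theorem mainTheorem14 (R : realType) (G : ptopologicalType)
  (mul : G -> G -> G) (inv : G -> G) (one : G)
  (HG : is_lgroup mul inv one)
  (mu : {measure set (borel G) -> \bar R})
  (Hmu : is_left_haar mul mu)
  (V : lmodType R[i]) (act : G -> V -> V)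
  (HV : is_smooth_module mul inv one act)
  (n : nat) (Hn : (1 <= n)%N) :
  [/\ (* T_n maps C_c^infty(G^{n+1},V) into C_c^infty(G^n,V) *)
      (forall f : {ptws 'I_n.+1 -> G} -> V,
         Cc_infty f -> Cc_infty (Tn mul inv mu act f)),
      (* T_n is surjective *)
      (forall h : {ptws 'I_n -> G} -> V, Cc_infty h ->
         exists f : {ptws 'I_n.+1 -> G} -> V, Cc_infty f /\ Tn mul inv mu act f = h)
    & (* ker T_n = span { g.f - f } *)
      (forall f : {ptws 'I_n.+1 -> G} -> V, Cc_infty f ->
         (Tn mul inv mu act f = (fun _ => 0) <->
          exists k (c : 'I_k -> R[i]) (g : 'I_k -> G)
                   (fs : 'I_k -> {ptws 'I_n.+1 -> G} -> V),
            (forall j, Cc_infty (fs j)) /\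
            forall x, f x = \sum_(j < k)
                c j *: (fun_act mul inv act (g j) (fs j) x - fs j x)))].
Proof.
split.
- exact: (Tn_Cc HG Hmu HV).
- exact: (Tn_surjective HG Hmu HV).
- move=> f hf; split; first exact: (Tn_kernel_span HG Hmu HV hf).
  by move=> [k [c [g [fs [hfs /funext ->]]]]]; exact: (Tn_span_kernel HG Hmu HV).
Qed.
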